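(* For every integer $k\ge 2$ there exists a cubic graph $G$ with a proper $5$-edge-coloring $c$ such that $|N_G(c)|=k$.
   Context: Graphs are finite, undirected, loopless, and may contain parallel edges. A proper $5$-edge-coloring of $G$ is a map $c:E(G)\to\{1,\dots,5\}$ with adjacent edges receiving different colors. For such $c$ and a vertex $v$, $S_c(v)$ is the set of colors on edges incident to $v$. An edge $uv$ of a cubic graph is poor if $|S_c(u)\cup S_c(v)|=3$, rich if $|S_c(u)\cup S_c(v)|=5$, and abnormal if it is neither poor nor rich. $N_G(c)$ denotes the set of abnormal edges of $G$ with respect to $c$. *)

From mathcomp Require Import all_boot.
Set Implicit Arguments. Unset Strict Implicit. Unset Printing Implicit Defensive.

(* A finite multigraph: vertex type V, edge type E, each edge e has
   endpoints (src e, dst e).  Parallel edges allowed (distinct edges may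
   have the same endpoints). *)
Section Graphs.
Variables (V E : finType) (src dst : E -> V).

Definition loopless : Prop := forall e, src e != dst e.

Definition incident (v : V) (e : E) : bool := (src e == v) || (dst e == v).

Definition inc_edges (v : V) : {set E} := [set e | incident v e].

(* cubic: every vertex has degree 3 (loopless, so degree = #incident edges) *)
Definition cubic : Prop := forall v, #|inc_edges v| = 3.

(* colours 1..5 are represented by 'I_5 *)
Definition proper_coloring (c : E -> 'I_5) : Prop :=
  forall e f, e != f -> (exists v, incident v e && incident v f) -> c e != c f.

Definition Sc (c : E -> 'I_5) (v : V) : {set 'I_5} := c @: inc_edges v.

Definition poor (c : E -> 'I_5) (e : E) : bool :=
  #|Sc c (src e) :|: Sc c (dst e)| == 3.
Definition rich (c : E -> 'I_5) (e : E) : bool :=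
  #|Sc c (src e) :|: Sc c (dst e)| == 5.
Definition abnormal (c : E -> 'I_5) (e : E) : bool :=
  ~~ poor c e && ~~ rich c e.

Definition abnormal_edges (c : E -> 'I_5) : {set E} := [set e | abnormal c e].
End Graphs.

(* Whether an edge is abnormal depends only on the colours around its two ends,
   so in a disjoint union of coloured graphs the abnormal edges of the union are
   the disjoint union of those of the components.

   The building block is the 3-cube Q3 (8 vertices, 12 edges), which carries
   two proper 5-edge-colourings: one with exactly 2 abnormal edges and one with
   exactly 3.  These finite facts are checked by computation, after the
   set-theoretic notions (colour sets S_c(v), poor/rich edges, cubicity,
   properness) are reflected into boolean tests over the enumerations of the
   vertex and edge types.

   Finally k = 2 * (k/2) for even k and k = 3 + 2 * (k/2 - 1) for odd k, so
   k/2 copies of Q3, all coloured with the 2-colouring except for one copy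
   coloured with the 3-colouring when k is odd, give exactly k abnormal edges. *)

From mathcomp Require Import all_boot.

Set Implicit Arguments.
Unset Strict Implicit.
Unset Printing Implicit Defensive.

Section Copies.
Variables (I V E : finType) (src dst : E -> V) (col : I -> E -> 'I_5).

Definition copies_src (x : I * E) : I * V := (x.1, src x.2).
Definition copies_dst (x : I * E) : I * V := (x.1, dst x.2).
Definition copies_col (x : I * E) : 'I_5 := col x.1 x.2.

Lemma incident_copies i v j e :
  incident copies_src copies_dst (i, v) (j, e) = (j == i) && incident src dst v e.
Proof. by rewrite /incident /copies_src /copies_dst /= !xpair_eqE; case: (j == i). Qed.

Lemma inc_edges_copies i v :
  inc_edges copies_src copies_dst (i, v) = pair i @: inc_edges src dst v.
Proof.
apply/setP => -[j e]; rewrite inE incident_copies.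
have [-> | ne_ji] /= := eqVneq j i.
  apply/idP/imsetP => [inc_ve | [e' + [->]]]; last by rewrite inE.
  by exists e; rewrite ?inE.
by apply/esym/negbTE/imsetP => -[e' _ [ej _]]; rewrite ej eqxx in ne_ji.
Qed.

Lemma Sc_copies i v :
  Sc copies_src copies_dst copies_col (i, v) = Sc src dst (col i) v.
Proof. by rewrite /Sc inc_edges_copies -imset_comp. Qed.

Lemma abnormal_copies i e :
  abnormal copies_src copies_dst copies_col (i, e) = abnormal src dst (col i) e.
Proof. by rewrite /abnormal /poor /rich /copies_src /copies_dst /= !Sc_copies. Qed.

Lemma loopless_copies : loopless src dst -> loopless copies_src copies_dst.
Proof. by move=> noloop [i e]; rewrite /copies_src /copies_dst xpair_eqE negb_and noloop orbT. Qed.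

Lemma cubic_copies : cubic src dst -> cubic copies_src copies_dst.
Proof.
by move=> cub [i v]; rewrite inc_edges_copies card_imset ?cub // => e f [].
Qed.

Lemma proper_copies :
  (forall i, proper_coloring src dst (col i)) ->
  proper_coloring copies_src copies_dst copies_col.
Proof.
move=> proper_col [i e] [j f] ne_ef [[l v] /andP[]].
rewrite !incident_copies => /andP[/eqP eq_il inc_ve] /andP[/eqP eq_jl inc_vf].
subst i j; apply: (proper_col l); last by exists v; rewrite inc_ve inc_vf.
by apply: contraNneq ne_ef => /= ->.
Qed.

Lemma card_abnormal_copies :
  #|abnormal_edges copies_src copies_dst copies_col| =
  \sum_(i : I) #|abnormal_edges src dst (col i)|.
Proof.
rewrite -sum1_card (eq_bigl (fun x => abnormal src dst (col x.1) x.2)); last first.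
  by move=> [i e]; rewrite inE abnormal_copies.
rewrite -(pair_big_dep xpredT (fun i e => abnormal src dst (col i) e) (fun _ _ => 1)).
by apply: eq_bigr => i _; rewrite -sum1_card; apply: eq_bigl => e; rewrite inE.
Qed.
End Copies.

Section Decide.
Variables (V E : finType) (src dst : E -> V).

Lemma card_count (T : finType) (A : {pred T}) : #|A| = count (mem A) (enum T).
Proof.
rewrite -size_filter -(card_uniqP (filter_uniq _ (enum_uniq T))).
by apply: eq_card => x; rewrite mem_filter mem_enum andbT.
Qed.

Definition sees_colour (c : E -> 'I_5) (v : V) (x : 'I_5) : bool :=
  has (fun e => incident src dst v e && (c e == x)) (enum E).

Lemma mem_Sc c v x : (x \in Sc src dst c v) = sees_colour c v x.
Proof.
apply/imsetP/hasP => [[e + ->] | [e _ /andP[inc_ve /eqP <-]]].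
  by rewrite inE => inc_ve; exists e; rewrite ?mem_enum ?inc_ve ?eqxx.
by exists e; rewrite ?inE.
Qed.

Definition colours_at_ends (c : E -> 'I_5) (e : E) : nat :=
  count (fun x => sees_colour c (src e) x || sees_colour c (dst e) x) (enum 'I_5).

Lemma card_abnormal_edges_count c :
  #|abnormal_edges src dst c| =
  count (fun e => (colours_at_ends c e != 3) && (colours_at_ends c e != 5)) (enum E).
Proof.
have ends e : #|Sc src dst c (src e) :|: Sc src dst c (dst e)| = colours_at_ends c e.
  by rewrite card_count; apply: eq_count => x; rewrite /= inE !mem_Sc.
by rewrite card_count; apply: eq_count => e; rewrite /= inE /abnormal /poor /rich ends.
Qed.

Lemma looplessb : all (fun e => src e != dst e) (enum E) -> loopless src dst.
Proof. by move/allP=> noloop e; apply: noloop; rewrite mem_enum. Qed.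

Lemma cubicb :
  all (fun v => count (incident src dst v) (enum E) == 3) (enum V) -> cubic src dst.
Proof.
move/allP=> deg3 v; rewrite card_count (eq_count (a2 := incident src dst v)).
  by apply/eqP/deg3; rewrite mem_enum.
by move=> e; rewrite /= inE.
Qed.

Lemma properb (c : E -> 'I_5) :
  all (fun e => all (fun f => (e != f) ==>
        has (fun v => incident src dst v e && incident src dst v f) (enum V) ==>
        (c e != c f)) (enum E)) (enum E) ->
  proper_coloring src dst c.
Proof.
move/allP=> ok e f ne_ef [v common].
move: (ok e (mem_enum _ e)) => /allP/(_ f (mem_enum _ f)).
by rewrite ne_ef /= => /implyP; apply; apply/hasP; exists v; rewrite ?mem_enum.
Qed.
End Decide.

(* Ordinals built by reduction modulo n.+1: their enumeration computes, unlike
   enum 'I_n.+1, whose membership proofs block evaluation. *)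
Definition ord_mod (n m : nat) : 'I_n.+1 := Ordinal (ltn_pmod m (ltn0Sn n)).

Lemma enum_ord_mod n : enum 'I_n.+1 = map (ord_mod n) (iota 0 n.+1).
Proof.
apply: (inj_map val_inj); rewrite val_enum_ord -map_comp -[LHS]map_id.
by apply/eq_in_map => m; rewrite mem_iota /= => lt_m; rewrite modn_small.
Qed.

(* The 3-cube: outer 4-cycle 0123, inner 4-cycle 4567 and rungs i -- i+4. *)
Definition cube_src (e : 'I_12) : 'I_8 := ord_mod 7 (nth 0 [:: 0;1;2;3;4;5;6;7;0;1;2;3] e).
Definition cube_dst (e : 'I_12) : 'I_8 := ord_mod 7 (nth 0 [:: 1;2;3;0;5;6;7;4;4;5;6;7] e).

Definition cube_col2 (e : 'I_12) : 'I_5 := ord_mod 4 (nth 0 [:: 0;1;0;1;2;3;2;4;3;4;4;3] e).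
Definition cube_col3 (e : 'I_12) : 'I_5 := ord_mod 4 (nth 0 [:: 0;1;2;3;1;0;3;4;2;3;4;0] e).

Lemma cube_loopless : loopless cube_src cube_dst.
Proof. by apply: looplessb; rewrite enum_ord_mod; vm_compute. Qed.

Lemma cube_cubic : cubic cube_src cube_dst.
Proof. by apply: cubicb; rewrite !enum_ord_mod; vm_compute. Qed.

Lemma cube_proper2 : proper_coloring cube_src cube_dst cube_col2.
Proof. by apply: properb; rewrite !enum_ord_mod; vm_compute. Qed.

Lemma cube_proper3 : proper_coloring cube_src cube_dst cube_col3.
Proof. by apply: properb; rewrite !enum_ord_mod; vm_compute. Qed.

Lemma cube_abnormal2 : #|abnormal_edges cube_src cube_dst cube_col2| = 2.
Proof. by rewrite card_abnormal_edges_count /colours_at_ends /sees_colour !enum_ord_mod; vm_compute. Qed.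

Lemma cube_abnormal3 : #|abnormal_edges cube_src cube_dst cube_col3| = 3.
Proof. by rewrite card_abnormal_edges_count /colours_at_ends /sees_colour !enum_ord_mod; vm_compute. Qed.

Definition cube_family (k : nat) (i : 'I_k./2) : 'I_12 -> 'I_5 :=
  if odd k && (val i == 0) then cube_col3 else cube_col2.

Lemma cube_family_proper k (i : 'I_k./2) : proper_coloring cube_src cube_dst (cube_family i).
Proof. by rewrite /cube_family; case: ifP => _; [exact: cube_proper3 | exact: cube_proper2]. Qed.

Lemma cube_family_abnormal k :
  2 <= k -> \sum_(i < k./2) #|abnormal_edges cube_src cube_dst (cube_family i)| = k.
Proof.
move=> k_ge2; rewrite -[RHS](odd_double_half k) /cube_family.
case: (odd k) => /=; last first.
  by rewrite (eq_bigr (fun _ => 2)) => [|i _]; rewrite ?cube_abnormal2 // sum_nat_const card_ord muln2.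
have [n half_k] : exists n, k./2 = n.+1 by exists k./2.-1; rewrite prednK // half_gt0.
rewrite half_k big_ord_recl /= cube_abnormal3.
rewrite (eq_bigr (fun _ => 2)) => [|i _]; last by rewrite cube_abnormal2.
by rewrite sum_nat_const card_ord muln2 doubleS !addSn.
Qed.

Theorem mainTheorem7 : forall k : nat, 2 <= k ->
  exists (V E : finType) (src dst : E -> V) (c : E -> 'I_5),
    [/\ loopless src dst, cubic src dst, proper_coloring src dst c &
        #|abnormal_edges src dst c| = k].
Proof.
move=> k k_ge2.
exists ('I_k./2 * 'I_8)%type, ('I_k./2 * 'I_12)%type.
exists (copies_src cube_src), (copies_dst cube_dst), (copies_col (@cube_family k)).
split.
- exact: loopless_copies cube_loopless.
- exact: cubic_copies cube_cubic.
- exact: proper_copies (@cube_family_proper k).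
- by rewrite card_abnormal_copies cube_family_abnormal.
Qed.
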